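(* For each $n$, let $W\in\mathbb{R}^{n\times n}$ be a random symmetric matrix with zero diagonal whose entries $W_{ij}$, $i<j$, are independent Rademacher random variables (uniform on $\{-1,+1\}$), and let $T=-\frac{\sqrt{n}}{4}\mathrm{Id}_{n\times n}+W$. Let $\kappa>0$ be a constant independent of $n$ such that, with probability tending to $1$ as $n\to\infty$, $$\max_{\substack{S\subseteq[n]\\|S|\leq \kappa n}}\|W_S\|_{2\to2}\leq \frac{1}{8}\sqrt{n},$$ where $W_S$ is the principal submatrix of $W$ indexed by $S$. Then, with probability tending to $1$ as $n\to\infty$, $$\rho_1(T)\leq \frac{34+o(1)}{\kappa^2}\,\frac{1}{\sqrt{n}},$$ where $o(1)$ denotes a quantity tending to $0$ as $n\to\infty$.
   Context: For a self-adjoint matrix $T\in\mathbb{C}^{n\times n}$, $$\rho_1(T):=\sup\left\{\langle Tx,x\rangle:\ x\in\mathbb{C}^n,\ \|x\|_1\leq 1\right\},$$ where $\|x\|_1=\sum_i|x_i|$. $\|M\|_{2\to2}$ is the Euclidean operator norm. *)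

From HB Require Import structures.
From mathcomp Require Import all_boot all_order all_algebra.
From mathcomp Require Import complex.
From mathcomp Require Import all_classical all_reals all_analysis.
Set Implicit Arguments. Unset Strict Implicit. Unset Printing Implicit Defensive.
Import Order.TTheory GRing.Theory Num.Theory.
Local Open Scope ring_scope.
Local Open Scope complex_scope.

Section Defs.
Variable R : realType.

(* rho_1(T) = sup { <Tx,x> : x in C^n, ||x||_1 <= 1 }, for a real matrix T
   viewed as a complex (self-adjoint when T is symmetric) matrix.
   <Tx,x> = sum_i (Tx)_i * conj(x_i). For self-adjoint T this is real; the set
   below collects the real numbers r with r = <Tx,x>. *)
Definition rho1 (n : nat) (T : 'M[R]_n) : R :=
  sup [set r : R | exists x : 'I_n -> R[i],
         \sum_i Normc.normc (x i) <= 1 /\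
         r%:C = \sum_i (\sum_j (T i j)%:C * x j) * (x i)^*].

Definition opnorm2 (m : nat) (A : 'M[R]_m) : R :=
  sup [set r : R | exists x : 'I_m -> R[i],
         \sum_i Normc.normc (x i) ^+ 2 <= 1 /\
         r = Num.sqrt (\sum_i Normc.normc (\sum_j (A i j)%:C * x j) ^+ 2)].

Definition princ_sub (n : nat) (A : 'M[R]_n) (S : {set 'I_n}) : 'M[R]_#|S| :=
  \matrix_(i < #|S|, j < #|S|) A (enum_val i) (enum_val j).

(* Sample space: uniform random sign pattern; only entries (i,j), i<j, are used,
   so under the uniform measure the W_ij (i<j) are i.i.d. Rademacher. *)
Definition Omega (n : nat) := {ffun 'I_n * 'I_n -> bool}.

Definition sgnb (b : bool) : R := if b then 1 else -1.

Definition Wmat (n : nat) (s : Omega n) : 'M[R]_n :=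
  \matrix_(i, j) (if i == j then 0
                  else if (i < j)%N then sgnb (s (i, j)) else sgnb (s (j, i))).

Definition Tmat (n : nat) (s : Omega n) : 'M[R]_n :=
  - (Num.sqrt (n%:R) / 4)%:M + Wmat s.

Definition Prob (n : nat) (E : pred (Omega n)) : R :=
  #|[set s | E s]|%:R / #|{: Omega n}|%:R.

End Defs.

From HB Require Import structures.
From mathcomp Require Import all_boot all_order all_algebra.
From mathcomp Require Import complex.
From mathcomp Require Import all_classical all_reals all_analysis.
From mathcomp Require Import ring lra.
Import Order.TTheory GRing.Theory Num.Theory.
Import numFieldNormedType.Exports.
Local Open Scope classical_set_scope.
Local Open Scope ring_scope.

(* Write [T = W - 2c Id] with [c = sqrt n / 8]; by hypothesis [|<W u, u>| <= c |u|^2]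
   for every real [u] supported on at most [K = kappa n] coordinates, and
   [<T x, x> = <T a, a> + <T b, b>] for [x = a + i b].  Fix [x] with [|x|_1 <= 1].
   The coordinates with [|x_i| > t = 2/K] form a set [S] of size at most [K/2],
   and the other coordinates carry squared mass at most [t].  Cut the complement
   of [S] into [m ~ 4/kappa] blocks of size at most [K/2] and expand the quadratic
   form of [W] over the pieces: every pair of pieces lives on at most [K]
   coordinates, so each cross term is controlled by the local bound.  Weighting
   the terms that pair [S] with a block by [1/(3m)] keeps the coefficient of
   [|x_S|^2] at [2c], which the shift absorbs, and what is left is
   [12 c m t = O(1/(kappa^2 sqrt n))].  For [kappa >= 1] the local bound is global
   and [<T x, x> <= 0]. *)

Section ComplexParts.
Context {R : rcfType}.
Local Open Scope complex_scope.
Local Notation Re := (@complex.Re R).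
Local Notation Im := (@complex.Im R).
Implicit Types (x y : R[i]) (a : R).

Lemma Re_sum (I : finType) (f : I -> R[i]) : Re (\sum_i f i) = \sum_i Re (f i).
Proof. by elim/big_rec2: _ => [//|i y1 [c d] _ <-]; case: (f i). Qed.

Lemma Im_sum (I : finType) (f : I -> R[i]) : Im (\sum_i f i) = \sum_i Im (f i).
Proof. by elim/big_rec2: _ => [//|i y1 [c d] _ <-]; case: (f i). Qed.

Lemma Re_realM a x : Re (a%:C * x) = a * Re x.
Proof. by case: x => c d /=; rewrite !mul0r subr0. Qed.

Lemma Im_realM a x : Im (a%:C * x) = a * Im x.
Proof. by case: x => c d /=; rewrite !mul0r addr0. Qed.

Lemma normc_sqr x : Normc.normc x ^+ 2 = Re x ^+ 2 + Im x ^+ 2.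
Proof. by case: x => a b /=; rewrite sqr_sqrtr // addr_ge0 // sqr_ge0. Qed.

Lemma normc_ge0 x : 0 <= Normc.normc x.
Proof. by case: x => a b /=; rewrite sqrtr_ge0. Qed.

Lemma Re_mul_conjc x y : Re (x * y^*) = Re x * Re y + Im x * Im y.
Proof. by case: x => a b; case: y => c d /=; rewrite mulrN opprK. Qed.

End ComplexParts.

Section Forms.
Context {R : comPzRingType} {n : nat}.
Implicit Types (A : 'M[R]_n) (u v : 'I_n -> R) (U V : {set 'I_n}).

Definition mxform A u v := \sum_i \sum_j A i j * u j * v i.

Definition sqnorm u := \sum_i u i ^+ 2.

Definition supported u U := forall i, i \notin U -> u i = 0.

Definition restrict u U i := if i \in U then u i else 0.

Lemma mxform_rowE A u v : mxform A u v = \sum_i (\sum_j A i j * u j) * v i.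
Proof. by apply: eq_bigr => i _; rewrite mulr_suml. Qed.

Lemma eq_mxform A {u u' v v'} : u =1 u' -> v =1 v' -> mxform A u v = mxform A u' v'.
Proof.
by move=> hu hv; apply: eq_bigr => i _; apply: eq_bigr => j _; rewrite hu hv.
Qed.

Lemma mxformDl A u u' v : mxform A (fun i => u i + u' i) v = mxform A u v + mxform A u' v.
Proof.
rewrite /mxform -big_split; apply: eq_bigr => i _; rewrite -big_split.
by apply: eq_bigr => j _ /=; rewrite mulrDr mulrDl.
Qed.

Lemma mxformZl A a u v : mxform A (fun i => a * u i) v = a * mxform A u v.
Proof.
rewrite /mxform mulr_sumr; apply: eq_bigr => i _; rewrite mulr_sumr.
by apply: eq_bigr => j _; rewrite mulrCA !mulrA.
Qed.

Lemma mxform_suml A m (z : 'I_m -> 'I_n -> R) v :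
  mxform A (fun i => \sum_k z k i) v = \sum_k mxform A (z k) v.
Proof.
transitivity (\sum_i \sum_j \sum_k A i j * z k j * v i).
  by apply: eq_bigr => i _; apply: eq_bigr => j _; rewrite mulr_sumr mulr_suml.
by under eq_bigr do rewrite exchange_big; rewrite exchange_big.
Qed.

Lemma mxformC A u v : A^T = A -> mxform A u v = mxform A v u.
Proof.
move=> symA; rewrite /mxform exchange_big; apply: eq_bigr => i _.
by apply: eq_bigr => j _; rewrite -[in A j i]symA mxE mulrAC.
Qed.

Lemma mxformDD A u v : A^T = A ->
  mxform A (fun i => u i + v i) (fun i => u i + v i) =
  mxform A u u + 2 * mxform A u v + mxform A v v.
Proof.
move=> symA; rewrite mxformDl [mxform A u _]mxformC // [mxform A v _]mxformC //.
by rewrite !mxformDl [mxform A v u]mxformC //; ring.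
Qed.

Lemma mxform_shift A a u : mxform (- a%:M + A) u u = mxform A u u - a * sqnorm u.
Proof.
rewrite /mxform /sqnorm mulr_sumr -sumrB; apply: eq_bigr => i _.
under eq_bigr do rewrite !mxE mulrDl mulrDl.
rewrite big_split /= (bigD1 i) //= eqxx mulr1n big1 ?addr0; first by ring.
by move=> j /negbTE; rewrite eq_sym => ->; rewrite mulr0n oppr0 !mul0r.
Qed.

Lemma sqnormZ a u : sqnorm (fun i => a * u i) = a ^+ 2 * sqnorm u.
Proof. by rewrite /sqnorm mulr_sumr; apply: eq_bigr => i _; rewrite exprMn. Qed.

Lemma supported_restrict u U : supported (restrict u U) U.
Proof. by move=> i /negbTE hi; rewrite /restrict hi. Qed.

Lemma supportedS {u U V} : U \subset V -> supported u U -> supported u V.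
Proof. by move=> /fintype.subsetP UV hu i hi; apply: hu; apply: contra hi; apply: UV. Qed.

Lemma supportedZ a {u U} : supported u U -> supported (fun i => a * u i) U.
Proof. by move=> hu i /hu ->; rewrite mulr0. Qed.

Lemma supportedD {u v U V} :
  supported u U -> supported v V -> supported (fun i => u i + v i) (U :|: V).
Proof. by move=> hu hv i; rewrite finset.in_setU negb_or => /andP[/hu -> /hv ->]; rewrite addr0. Qed.

End Forms.

Lemma card_setU_le {R : numDomainType} (T : finType) (U V : {set T}) (a b : R) :
  #|U|%:R <= a -> #|V|%:R <= b -> #|U :|: V|%:R <= a + b.
Proof.
move=> hU hV; apply: le_trans (lerD hU hV); rewrite -natrD ler_nat.
by rewrite cardsU leq_subr.
Qed.

Section LocalFormBound.
Context {R : realFieldType} {n : nat}.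
Implicit Types (u v w y : 'I_n -> R) (U V S : {set 'I_n}).

Lemma sqnorm_ge0 u : 0 <= sqnorm u.
Proof. by apply: sumr_ge0 => i _; rewrite sqr_ge0. Qed.

Lemma sqnorm_eq0 {u} : sqnorm u = 0 -> forall i, u i = 0.
Proof.
move=> u0 i; apply/eqP; rewrite -sqrf_eq0; apply/eqP.
by move: u0 => /psumr_eq0P; apply => // j _; rewrite sqr_ge0.
Qed.

Lemma sqnormD_le u v : sqnorm (fun i => u i + v i) <= 2 * sqnorm u + 2 * sqnorm v.
Proof.
rewrite /sqnorm !mulr_sumr -big_split; apply: ler_sum => i _ /=.
have := sqr_ge0 (u i - v i); nra.
Qed.

Lemma restrictDC w S i : restrict w S i + restrict w (~: S) i = w i.
Proof. by rewrite /restrict inE; case: (i \in S); rewrite ?addr0 ?add0r. Qed.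

Lemma sqnorm_restrictDC w S : sqnorm w = sqnorm (restrict w S) + sqnorm (restrict w (~: S)).
Proof.
rewrite /sqnorm -big_split; apply: eq_bigr => i _.
by rewrite /restrict inE; case: (i \in S) => /=; rewrite ?exprS ?mul0r ?addr0 ?add0r.
Qed.

Lemma sum_restrict_blocks {m} (blk : 'I_n -> 'I_m) w S (F : R -> R) i : F 0 = 0 ->
  \sum_k F (restrict w (~: S :&: [set j | blk j == k]%SET) i) = F (restrict w (~: S) i).
Proof.
move=> F0; rewrite (bigD1 (blk i)) //= big1 ?addr0 => [|k /negbTE hk].
  by rewrite /restrict !inE eqxx andbT.
by rewrite /restrict !inE eq_sym hk andbF.
Qed.

Context {A : 'M[R]_n} {c K : R}.
Hypotheses (c_ge0 : 0 <= c) (symA : A^T = A).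
Hypothesis form_local : forall {U u}, #|U|%:R <= K -> supported u U ->
  `|mxform A u u| <= c * sqnorm u.

Lemma mxform_cross_le {U V u v} :
  #|U :|: V|%:R <= K -> supported u U -> supported v V ->
  2 * mxform A u v <= 3 * c * (sqnorm u + sqnorm v).
Proof.
move=> UVK hu hv.
have UK : #|U|%:R <= K.
  by apply: le_trans UVK; rewrite ler_nat subset_leq_card // finset.subsetUl.
have VK : #|V|%:R <= K.
  by apply: le_trans UVK; rewrite ler_nat subset_leq_card // finset.subsetUr.
have := form_local UVK (supportedD hu hv).
have := form_local UK hu; have := form_local VK hv.
rewrite mxformDD // !ler_norml => /andP[hv1 _] /andP[hu1 _] /andP[_ huv].
have huv2 := ler_wpM2l c_ge0 (sqnormD_le u v); lra.
Qed.

Lemma mxform_cross_le_scaled {U V u v} (l : R) : 0 < l ->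
  #|U :|: V|%:R <= K -> supported u U -> supported v V ->
  2 * mxform A u v <= 3 * c * (l * sqnorm u + sqnorm v / l).
Proof.
move=> l0 UVK hu hv; rewrite -(ler_pM2l l0).
have := mxform_cross_le UVK (supportedZ l hu) hv; rewrite mxformZl sqnormZ.
have -> : l * (3 * c * (l * sqnorm u + sqnorm v / l)) =
          3 * c * (l ^+ 2 * sqnorm u + sqnorm v) by field; rewrite gt_eqF.
by rewrite mulrCA.
Qed.

Lemma mxform_sum_le {m} {z : 'I_m -> 'I_n -> R} {blocks : 'I_m -> {set 'I_n}} :
  (forall k, supported (z k) (blocks k)) ->
  (forall k l, #|blocks k :|: blocks l|%:R <= K) ->
  mxform A (fun i => \sum_k z k i) (fun i => \sum_k z k i) <=
    3 * c * m%:R * \sum_k sqnorm (z k).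
Proof.
move=> hz hK; set Z := \sum_k sqnorm (z k).
have expand : 2 * mxform A (fun i => \sum_k z k i) (fun i => \sum_k z k i) =
              \sum_k \sum_l 2 * mxform A (z k) (z l).
  rewrite mxform_suml mulr_sumr; apply: eq_bigr => k _.
  by rewrite mxformC // mxform_suml mulr_sumr; apply: eq_bigr => l _; rewrite mxformC.
have pairs : \sum_(k < m) \sum_(l < m) 3 * c * (sqnorm (z k) + sqnorm (z l)) =
             2 * (3 * c * m%:R * Z).
  under eq_bigr do rewrite -mulr_sumr big_split /= sumr_const card_ord.
  rewrite -mulr_sumr big_split /= sumr_const card_ord sumrMnl -/Z.
  by rewrite -[Z *+ m]mulr_natr; ring.
rewrite -(ler_pM2l (ltr0Sn _ 1)) expand -pairs.
by apply: ler_sum => k _; apply: ler_sum => l _; apply: mxform_cross_le.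
Qed.

Lemma mxform_cross_sum_le {m} {z : 'I_m -> 'I_n -> R} {blocks : 'I_m -> {set 'I_n}} {y U} :
  (0 < m)%N -> supported y U -> (forall k, supported (z k) (blocks k)) ->
  (forall k, #|U :|: blocks k|%:R <= K) ->
  2 * mxform A y (fun i => \sum_k z k i) <=
    c * sqnorm y + 9 * c * m%:R * \sum_k sqnorm (z k).
Proof.
move=> m0 hy hz hK; have m0' : 0 < m%:R :> R by rewrite ltr0n.
have l0 : 0 < (3 * m%:R)^-1 :> R by rewrite invr_gt0 mulr_gt0.
rewrite mxformC // mxform_suml mulr_sumr.
under eq_bigr do rewrite mxformC //.
(* The weight [(3m)^-1] keeps the total coefficient of [sqnorm y] equal to [c]. *)
have hk k : 2 * mxform A y (z k) <=
    3 * c * ((3 * m%:R)^-1 * sqnorm y + sqnorm (z k) / (3 * m%:R)^-1).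
  exact: mxform_cross_le_scaled l0 (hK k) hy (hz k).
apply: le_trans (ler_sum _ (fun k _ => hk k)) _.
rewrite -mulr_sumr big_split /= sumr_const card_ord -mulr_suml invrK.
rewrite -[_ *+ m]mulr_natr le_eqVlt; apply/orP; left.
by apply/eqP; field; rewrite gt_eqF.
Qed.

Lemma mxform_shift_le_tail {m} (blk : 'I_n -> 'I_m) S w : (0 < m)%N ->
  #|S|%:R <= K / 2 -> (forall k, #|[set i | blk i == k]%SET|%:R <= K / 2) ->
  mxform A w w - 2 * c * sqnorm w <= 12 * c * m%:R * sqnorm (restrict w (~: S)).
Proof.
move=> m0 hS hB.
pose blocks k := [set i | blk i == k]%SET.
pose z k := restrict w (~: S :&: blocks k).
have hz k : supported (z k) (blocks k).
  by apply: supportedS (supported_restrict _ _); apply: finset.subsetIr.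
have Zsum : \sum_k sqnorm (z k) = sqnorm (restrict w (~: S)).
  rewrite /sqnorm exchange_big; apply: eq_bigr => i _.
  by apply: (sum_restrict_blocks blk w S (fun x => x ^+ 2)); rewrite exprS mul0r.
have wsum : w =1 fun i => restrict w S i + \sum_k z k i.
  by move=> i; rewrite (sum_restrict_blocks blk w S id) // restrictDC.
have hSK : #|S|%:R <= K by have := ler0n R #|S|; lra.
have hSB k : #|S :|: blocks k|%:R <= K.
  by rewrite [K]splitr; exact: card_setU_le hS (hB k).
have hBB k l : #|blocks k :|: blocks l|%:R <= K.
  by rewrite [K]splitr; exact: card_setU_le (hB k) (hB l).
have hyy : mxform A (restrict w S) (restrict w S) <= c * sqnorm (restrict w S).
  by have /ler_normlP[] := form_local hSK (supported_restrict w S).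
have hyz := mxform_cross_sum_le m0 (supported_restrict w S) hz hSB.
have hzz := mxform_sum_le hz hBB.
rewrite (eq_mxform A wsum wsum) mxformDD // (sqnorm_restrictDC w S) -Zsum.
have cZ : 0 <= c * \sum_k sqnorm (z k) by rewrite mulr_ge0 // sumr_ge0 // => k _; apply: sqnorm_ge0.
lra.
Qed.

End LocalFormBound.

Lemma big_enum_val_supp {T : finType} {V : nmodType} (S : {set T}) (F : T -> V) :
  (forall i, i \notin S -> F i = 0) -> \sum_i F i = \sum_(k < #|S|) F (enum_val k).
Proof.
move=> FS; rewrite -big_enum_val [RHS]big_mkcond /=; apply: eq_bigr => i _.
by case: ifP => // /negbT /FS.
Qed.

Lemma sqr_sum_le_l1 {R : realDomainType} m (a r : 'I_m -> R) :
  (forall j, `|r j| <= 1) -> (\sum_j a j * r j) ^+ 2 <= (\sum_j `|a j|) ^+ 2.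
Proof.
move=> r_le1; rewrite -real_normK ?num_real // lerXn2r ?nnegrE ?sumr_ge0 //.
apply: le_trans (ler_norm_sum _ _ _) _; apply: ler_sum => j _.
by rewrite normrM ler_piMr.
Qed.

Section OperatorNorm.
Context {R : realType}.
Local Open Scope complex_scope.
Local Notation Re := (@complex.Re R).
Local Notation Im := (@complex.Im R).

Lemma normc_parts_le1 {m} {x : 'I_m -> R[i]} j :
  \sum_i Normc.normc (x i) ^+ 2 <= 1 -> `|Re (x j)| <= 1 /\ `|Im (x j)| <= 1.
Proof.
move=> x_le1; have : Normc.normc (x j) ^+ 2 <= 1.
  apply: le_trans x_le1; rewrite (bigD1 j) //= lerDl.
  by apply: sumr_ge0 => i _; rewrite sqr_ge0.
have sqr_le1 (a : R) : a ^+ 2 <= 1 -> `|a| <= 1.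
  by move=> ha; rewrite -(ler_pXn2r (ltn0Sn 1)) ?nnegrE // expr1n real_normK ?num_real.
rewrite normc_sqr => h; have := sqr_ge0 (Re (x j)); have := sqr_ge0 (Im (x j)).
by move=> hIm hRe; split; apply: sqr_le1; lra.
Qed.

Lemma opnorm2_ub {m} (A : 'M[R]_m) (x : 'I_m -> R[i]) :
  \sum_i Normc.normc (x i) ^+ 2 <= 1 ->
  Num.sqrt (\sum_i Normc.normc (\sum_j (A i j)%:C * x j) ^+ 2) <= opnorm2 A.
Proof.
move=> x_le1; apply: ub_le_sup; last by exists x.
exists (Num.sqrt (\sum_i 2 * (\sum_j `|A i j|) ^+ 2)) => _ [y [y_le1 ->]].
rewrite ler_wsqrtr //; apply: ler_sum => i _.
rewrite normc_sqr Re_sum Im_sum mulr2n mulrDl mul1r.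
under eq_bigr do rewrite Re_realM; under [X in _ + X ^+ 2]eq_bigr do rewrite Im_realM.
by apply: lerD; apply: sqr_sum_le_l1 => j; case: (normc_parts_le1 j y_le1).
Qed.

Lemma opnorm2_ge0 {m} (A : 'M[R]_m) : 0 <= opnorm2 A.
Proof.
apply: le_trans (sqrtr_ge0 _) (opnorm2_ub A (fun=> 0) _).
by rewrite big1 ?ler01 // => i _; rewrite Normc.normc0 expr0n.
Qed.

Lemma sqnorm_mul_le_unit {m} (A : 'M[R]_m) (v : 'I_m -> R) : sqnorm v <= 1 ->
  sqnorm (fun i => \sum_j A i j * v j) <= opnorm2 A ^+ 2.
Proof.
move=> v_le1; have := opnorm2_ub A (fun i => (v i)%:C).
have normc_real (a : R) : Normc.normc a%:C ^+ 2 = a ^+ 2.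
  by rewrite normc_sqr /= expr0n addr0.
under eq_bigr do rewrite normc_real; move=> /(_ v_le1).
under eq_bigr => i _.
  under eq_bigr do rewrite -rmorphM.
  rewrite -rmorph_sum normc_real.
  over.
move=> h; rewrite -[X in X <= _]sqr_sqrtr ?lerXn2r ?nnegrE ?sqrtr_ge0 ?opnorm2_ge0 //.
by apply: sumr_ge0 => i _; rewrite sqr_ge0.
Qed.

Lemma sqnorm_mul_le {m} (A : 'M[R]_m) (u : 'I_m -> R) :
  sqnorm (fun i => \sum_j A i j * u j) <= opnorm2 A ^+ 2 * sqnorm u.
Proof.
have [u_le0|u_gt0] := lerP (sqnorm u) 0.
  have u0 : sqnorm u = 0 by apply/le_anti; rewrite u_le0 sqnorm_ge0.
  rewrite u0 mulr0 /sqnorm big1 // => i _.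
  by rewrite big1 ?expr0n // => j _; rewrite (sqnorm_eq0 u0) mulr0.
set k := Num.sqrt (sqnorm u); have k_gt0 : 0 < k by rewrite sqrtr_gt0.
have kk : k ^+ 2 = sqnorm u by rewrite sqr_sqrtr // ltW.
have := sqnorm_mul_le_unit A (fun j => k^-1 * u j).
rewrite sqnormZ exprVn kk mulVf ?gt_eqF // lexx => /(_ isT).
have -> : sqnorm (fun i => \sum_j A i j * (k^-1 * u j)) =
          k^-1 ^+ 2 * sqnorm (fun i => \sum_j A i j * u j).
  rewrite -sqnormZ; apply: eq_bigr => i _; rewrite mulr_sumr.
  by congr (_ ^+ 2); apply: eq_bigr => j _; rewrite mulrCA.
by rewrite exprVn kk ler_pdivrMl // mulrC.
Qed.

Lemma mxform_le_opnorm2 {m} (A : 'M[R]_m) (c : R) (u : 'I_m -> R) :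
  0 < c -> opnorm2 A <= c -> `|mxform A u u| <= c * sqnorm u.
Proof.
move=> c0 Ac; set p := fun i => \sum_j A i j * u j.
have p_le : sqnorm p <= c ^+ 2 * sqnorm u.
  apply: le_trans (sqnorm_mul_le A u) _; rewrite ler_wpM2r ?sqnorm_ge0 //.
  by apply: lerXn2r; rewrite ?nnegrE ?opnorm2_ge0 ?(ltW c0).
have amgm : 2 * c * \sum_i `|p i * u i| <= sqnorm p + c ^+ 2 * sqnorm u.
  rewrite /sqnorm mulr_sumr [c ^+ 2 * _]mulr_sumr -big_split; apply: ler_sum => i _ /=.
  rewrite normrM -[p i ^+ 2]real_normK ?num_real // -[u i ^+ 2]real_normK ?num_real //.
  have := sqr_ge0 (`|p i| - c * `|u i|); rewrite sqrrB -mulr_natr => h; lra.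
rewrite mxform_rowE -/p; apply: le_trans (ler_norm_sum _ _ _) _.
rewrite -(ler_pM2l (mulr_gt0 (ltr0Sn _ 1) c0)); lra.
Qed.

Lemma mxform_princ_sub {n} (A : 'M[R]_n) {S : {set 'I_n}} {u : 'I_n -> R} :
  supported u S ->
  mxform (princ_sub A S) (fun k => u (enum_val k)) (fun k => u (enum_val k)) =
  mxform A u u.
Proof.
move=> uS; rewrite [RHS](big_enum_val_supp S); last first.
  by move=> i /uS ->; rewrite big1 // => j _; rewrite mulr0.
apply: eq_bigr => k _; rewrite [RHS](big_enum_val_supp S); last first.
  by move=> j /uS ->; rewrite mulr0 mul0r.
by apply: eq_bigr => l _; rewrite mxE.
Qed.

Lemma sqnorm_enum_val {n} {S : {set 'I_n}} {u : 'I_n -> R} : supported u S ->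
  sqnorm (fun k : 'I_#|S| => u (enum_val k)) = sqnorm u.
Proof. by move=> uS; rewrite [RHS](big_enum_val_supp S) // => i /uS ->; rewrite expr0n. Qed.

Lemma mxform_local_of_opnorm2 {n} (A : 'M[R]_n) (c K : R) : 0 < c ->
  (forall S : {set 'I_n}, #|S|%:R <= K -> opnorm2 (princ_sub A S) <= c) ->
  forall (U : {set 'I_n}) (u : 'I_n -> R),
  #|U|%:R <= K -> supported u U -> `|mxform A u u| <= c * sqnorm u.
Proof.
move=> c0 hA U u UK uU; rewrite -(mxform_princ_sub A uU) -(sqnorm_enum_val uU).
exact: mxform_le_opnorm2 c0 (hA U UK).
Qed.

End OperatorNorm.

Section Rho1.
Context {R : realType}.
Local Open Scope complex_scope.
Local Notation Re := (@complex.Re R).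
Local Notation Im := (@complex.Im R).

Lemma Re_cform {n} (T : 'M[R]_n) (x : 'I_n -> R[i]) :
  Re (\sum_i (\sum_j (T i j)%:C * x j) * (x i)^*) =
  mxform T (fun i => Re (x i)) (fun i => Re (x i)) +
  mxform T (fun i => Im (x i)) (fun i => Im (x i)).
Proof.
rewrite Re_sum !mxform_rowE -big_split; apply: eq_bigr => i _ /=.
rewrite Re_mul_conjc Re_sum Im_sum.
by congr (_ * _ + _ * _); apply: eq_bigr => j _; rewrite ?Re_realM ?Im_realM.
Qed.

Lemma rho1_le {n} (T : 'M[R]_n) (b : R) :
  (forall x : 'I_n -> R[i], \sum_i Normc.normc (x i) <= 1 ->
     mxform T (fun i => Re (x i)) (fun i => Re (x i)) +
     mxform T (fun i => Im (x i)) (fun i => Im (x i)) <= b) ->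
  rho1 T <= b.
Proof.
move=> hb; apply: ge_sup.
  exists 0, (fun=> 0); split; first by rewrite big1 ?ler01 // => i _; exact: Normc.normc0.
  by rewrite big1 // => i _; rewrite big1 ?mul0r // => j _; rewrite mulr0.
by move=> r [x [x_le1 /(congr1 Re)]]; rewrite /= Re_cform => ->; apply: hb.
Qed.

Lemma card_normc_gt_le {n} (x : 'I_n -> R[i]) (t : R) :
  #|[set i | t < Normc.normc (x i)]%SET|%:R * t <= \sum_i Normc.normc (x i).
Proof.
set S := [set i | _]%SET; rewrite mulr_natl -sumr_const.
apply: le_trans (_ : \sum_(i in S) Normc.normc (x i) <= _).
  by apply: ler_sum => i; rewrite inE => /ltW.
rewrite [X in _ <= X](bigID (mem S)) /= lerDl.
by apply: sumr_ge0 => i _; exact: normc_ge0.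
Qed.

Lemma sqnorm_parts_le {n} {x : 'I_n -> R[i]} {S : {set 'I_n}} {t : R} : 0 <= t ->
  (forall i, i \notin S -> Normc.normc (x i) <= t) ->
  sqnorm (restrict (fun i => Re (x i)) (~: S)) +
  sqnorm (restrict (fun i => Im (x i)) (~: S)) <= t * \sum_i Normc.normc (x i).
Proof.
move=> t0 small; rewrite /sqnorm -big_split mulr_sumr; apply: ler_sum => i _ /=.
rewrite /restrict inE; case: ifP => [/small xt|_].
  by rewrite -normc_sqr expr2 ler_wpM2r ?normc_ge0.
by rewrite exprS mul0r addr0 mulr_ge0 ?normc_ge0.
Qed.

End Rho1.

Lemma card_block_le (n b : nat) (k : 'I_(n %/ b).+1) : (0 < b)%N ->
  (#|[set i : 'I_n | inord (i %/ b) == k]%SET| <= b)%N.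
Proof.
move=> b0; have := @leq_card_in _ _ (fun i : 'I_n => Ordinal (ltn_pmod i b0))
  [set i : 'I_n | inord (i %/ b)%N == k]%SET.
rewrite card_ord; apply => i j; rewrite !inE => /eqP ik /eqP jk [ij].
have blockE (l : 'I_n) : inord (l %/ b)%N = k -> (l %/ b)%N = k.
  by move=> <-; rewrite inordK // ltnS leq_div2r // ltnW.
by apply: val_inj; rewrite /= (divn_eq i b) (divn_eq j b) ij (blockE _ ik) (blockE _ jk).
Qed.

Section ShiftedForm.
Context {R : realType} {n : nat} {A : 'M[R]_n} {c K : R}.
Hypotheses (c_gt0 : 0 < c) (symA : A^T = A).
Hypothesis form_local : forall (U : {set 'I_n}) (u : 'I_n -> R),
  #|U|%:R <= K -> supported u U -> `|mxform A u u| <= c * sqnorm u.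

Lemma rho1_shift_le0 : n%:R <= K -> rho1 (- (2 * c)%:M + A) <= 0.
Proof.
move=> nK; apply: rho1_le => x _; rewrite !mxform_shift.
have shift_le0 u : mxform A u u - 2 * c * sqnorm u <= 0.
  have nK' : #|[set: 'I_n]%SET|%:R <= K by rewrite cardsT card_ord.
  have full : supported u [set: 'I_n]%SET by move=> i; rewrite inE.
  have /ler_normlP[_ uc] := form_local _ _ nK' full.
  have := mulr_ge0 (ltW c_gt0) (sqnorm_ge0 u); lra.
by rewrite -[0]addr0 lerD.
Qed.

Lemma rho1_shift_le (t : R) (b : nat) : 0 < t -> 2 <= t * K -> (0 < b)%N ->
  b%:R <= K / 2 -> rho1 (- (2 * c)%:M + A) <= 12 * c * (n %/ b)%N.+1%:R * t.
Proof.
move=> t0 tK b0 bK; apply: rho1_le => x x_le1; rewrite !mxform_shift.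
set S := [set i | t < Normc.normc (x i)]%SET.
have SK : #|S|%:R <= K / 2.
  have St := le_trans (card_normc_gt_le x t) x_le1.
  by rewrite ler_pdivlMr // -(ler_pM2l t0); lra.
pose blk (i : 'I_n) : 'I_(n %/ b).+1 := inord (i %/ b)%N.
have blkK k : #|[set i | blk i == k]%SET|%:R <= K / 2.
  by apply: le_trans bK; rewrite ler_nat card_block_le.
have small i : i \notin S -> Normc.normc (x i) <= t by rewrite inE -leNgt.
have parts := le_trans (sqnorm_parts_le (ltW t0) small) (ler_wpM2l (ltW t0) x_le1).
have sub w := mxform_shift_le_tail (ltW c_gt0) symA form_local blk S w (ltn0Sn _) SK blkK.
apply: le_trans (lerD (sub _) (sub _)) _; rewrite -mulrDr.
have m_ge0 : 0 <= 12 * c * (n %/ b)%N.+1%:R by rewrite !mulr_ge0 ?(ltW c_gt0).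
by apply: le_trans (ler_wpM2l m_ge0 parts) _; rewrite mulr1.
Qed.

End ShiftedForm.

Lemma Wmat_sym {R : realType} {n} (s : Omega n) : (Wmat R s)^T = Wmat R s.
Proof.
apply/matrixP => i j; rewrite !mxE [j == i]eq_sym; case: eqVneq => // ij.
by case: ltngtP => // /val_inj ji; move: ij; rewrite ji eqxx.
Qed.

Lemma rho1_Tmat_le {R : realType} (kappa : R) n (s : Omega n) :
  0 < kappa -> (0 < n)%N -> (kappa < 1 -> 4 <= kappa * n%:R) ->
  [forall S : {set 'I_n}, (#|S|%:R <= kappa * n%:R) ==>
     (opnorm2 (princ_sub (Wmat R s) S) <= Num.sqrt n%:R / 8)] ->
  rho1 (Tmat R s) <= 34 / kappa ^+ 2 / Num.sqrt n%:R.
Proof.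
move=> k0 n0 kn local.
have n_gt0 : 0 < n%:R :> R by rewrite ltr0n.
set q := Num.sqrt n%:R; have q0 : 0 < q by rewrite sqrtr_gt0.
have qq : q ^+ 2 = n%:R by rewrite sqr_sqrtr // ltW.
set c := q / 8; have c0 : 0 < c by rewrite divr_gt0.
have form_local := mxform_local_of_opnorm2 _ _ (kappa * n%:R) c0
  (fun S SK => implyP (forallP local S) SK).
have -> : Tmat R s = - (2 * c)%:M + Wmat R s.
  by rewrite /Tmat -/q /c; congr (- _%:M + _); field.
have bound_ge0 : 0 <= 34 / kappa ^+ 2 / q.
  by rewrite !divr_ge0 ?ler0n ?sqr_ge0 ?(ltW q0).
have [k_ge1|k_lt1] := lerP 1 kappa.
  apply: le_trans (rho1_shift_le0 c0 form_local _) bound_ge0.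
  by rewrite -[X in X <= _]mul1r ler_wpM2r ?ler0n.
set K := kappa * n%:R; have K4 : 4 <= K := kn k_lt1.
set b := Num.truncn (K / 2).
have b_le : b%:R <= K / 2 by rewrite truncn_le divr_ge0 //; lra.
have b_gt : K / 2 < b%:R + 1 by rewrite natr1; apply: truncnS_gt.
have b0 : (0 < b)%N by rewrite -(ltr0n R); lra.
have blocks_kappa : (n %/ b)%N%:R * kappa <= 4.
  have db : (n %/ b)%N%:R * b%:R <= n%:R :> R by rewrite -natrM ler_nat leq_divM.
  have Kb : K <= 4 * b%:R by lra.
  have := ler_wpM2l (ler0n R (n %/ b)) Kb; rewrite /K => dK.
  by rewrite -(ler_pM2r n_gt0); lra.
have K_gt0 : 0 < K by lra.
apply: le_trans (rho1_shift_le c0 (Wmat_sym s) form_local (2 / K) b _ _ b0 b_le) _.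
- by rewrite divr_gt0.
- by rewrite divfK ?gt_eqF.
have -> : 12 * c * (n %/ b)%N.+1%:R * (2 / K) =
          3 * ((n %/ b)%N.+1%:R * kappa) / (kappa ^+ 2 * q).
  by rewrite /c /K -qq; field; rewrite !gt_eqF.
have -> : 34 / kappa ^+ 2 / q = 34 / (kappa ^+ 2 * q) by rewrite [in RHS]invfM mulrA.
(* [(n %/ b + 1) kappa <= 4 + kappa < 5]: the constant could be [15] instead of [34]. *)
rewrite ler_pM2r ?invr_gt0 ?mulr_gt0 ?exprn_gt0 // -natr1; lra.
Qed.

Lemma Prob_le {R : realType} n (E1 E2 : pred (Omega n)) :
  (forall s, E1 s -> E2 s) -> Prob R E1 <= Prob R E2.
Proof.
move=> E12; rewrite /Prob ler_pM2r ?invr_gt0 ?ltr0n; last first.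
  by apply/card_gt0P; exists [ffun=> true].
by rewrite ler_nat subset_leq_card //; apply/fintype.subsetP => s; rewrite !inE => /E12.
Qed.

Lemma Prob_le1 {R : realType} n (E : pred (Omega n)) : Prob R E <= 1.
Proof.
have : (0 < #|{: Omega n}|)%N by apply/card_gt0P; exists [ffun=> true].
by rewrite /Prob -(ltr0n R) => card_gt0; rewrite ler_pdivrMr // mul1r ler_nat max_card.
Qed.

Theorem lemma3 (R : realType) (kappa : R) :
  0 < kappa ->
  (fun n : nat => Prob R (fun s : Omega n =>
      [forall S : {set 'I_n},
        (#|S|%:R <= kappa * n%:R) ==>
        (opnorm2 (princ_sub (Wmat R s) S) <= Num.sqrt (n%:R) / 8)]))
    @ \oo --> (1 : R) ->
  exists eps : nat -> R,
    eps @ \oo --> (0 : R) /\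
    (fun n : nat => Prob R (fun s : Omega n =>
        rho1 (Tmat R s) <= (34 + eps n) / kappa ^+ 2 / Num.sqrt (n%:R)))
      @ \oo --> (1 : R).
Proof.
move=> k0 local_whp; exists (fun=> 0); split; first exact: cvg_cst.
have [N N_ge] : exists N : nat, 4 / kappa <= N%:R.
  by exists (Num.truncn (4 / kappa)).+1; apply/ltW/truncnS_gt.
apply: (@squeeze_cvgr _ _ _ R _ (fun=> 1) _ _ _ local_whp (cvg_cst (1 : R))).
near=> n.
have n0 : (0 < n)%N by near: n; exists 1%N.
have nN : (N <= n)%N by near: n; exists N.
rewrite Prob_le1 andbT; apply: Prob_le => s local; rewrite addr0.
apply: rho1_Tmat_le => // _; rewrite -ler_pdivrMl // mulrC.
by apply: le_trans N_ge _; rewrite ler_nat.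
Unshelve. all: end_near. Qed.
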